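(* For every integer $r \geq 3$ and every positive integer $n$, $$g'(r,n)\geq \frac{2n}{r+1}-\frac{\binom{2r}{r}}{r+1}.$$
   Context: A hypergraph is $r$-uniform if every edge contains exactly $r$ vertices. A matching is a set of pairwise vertex-disjoint edges. Given a collection (family, repetitions allowed) of matchings $M_1,\dots,M_n$ in a hypergraph (not necessarily disjoint from one another), a matching $M\subseteq \bigcup_{i=1}^n M_i$ is called rainbow if there is an injection $\phi:M\to[n]$ such that every edge $e\in M$ belongs to $M_{\phi(e)}$. $g'(r,n)$ denotes the largest integer $s$ such that every collection of $n$ matchings, each of size $n$, in an $r$-uniform hypergraph admits a rainbow matching of size $s$. *)

From mathcomp Require Import all_boot all_order all_algebra.
Set Implicit Arguments. Unset Strict Implicit. Unset Printing Implicit Defensive.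

Definition uniform (V : finType) (r : nat) (E : {set {set V}}) : Prop :=
  forall e, e \in E -> #|e| = r.

Definition matching (V : finType) (M : {set {set V}}) : Prop :=
  forall e f, e \in M -> f \in M -> e != f -> [disjoint e & f].

Definition rainbow_matching (V : finType) (n : nat)
    (F : 'I_n -> {set {set V}}) (M : {set {set V}}) : Prop :=
  matching M /\ M \subset \bigcup_(i < n) F i /\
  exists phi : {set V} -> 'I_n,
    {in M &, injective phi} /\ (forall e, e \in M -> e \in F (phi e)).

(* Let M be a maximum rainbow matching and U the set of its n - |M| unused
   colours.  By maximality every edge f of a colour j in U meets the vertex set
   of M; call f private to e in M if it meets that vertex set inside e only.
   Then f either has two vertices in V(M) or is private, so summing over the n
   edges of colour j gives 2n <= r|M| + sum_e |P_j(e)|.  Two private edges of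
   the same e with distinct unused colours intersect, since otherwise swapping
   e for both of them enlarges M.  Hence, for the colours j having two private
   edges f_j, g_j at e, the pairs (f_j, g_j) and (g_j, f_j) form a
   cross-intersecting family of disjoint r-set pairs, and Bollobas's set-pairs
   inequality bounds their number by C(2r, r).  Double counting over U and M
   yields 2n <= (r + 1)|M| + C(2r, r); only r >= 1 is needed. *)

From mathcomp Require Import all_boot all_order all_algebra zify.
From Stdlib Require Import Classical.
Import Order.TTheory GRing.Theory Num.Theory.
Set Implicit Arguments. Unset Strict Implicit. Unset Printing Implicit Defensive.

Lemma ex_maxn_prop (P : nat -> Prop) (b : nat) :
  (exists k, P k) -> (forall k, P k -> k <= b) ->
  exists2 k, P k & forall j, P j -> j <= k.
Proof.
move=> [k0 Pk0] Pb; apply: NNPP => no_max.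
have unbounded i : exists2 k, P k & i <= k.
  elim: i => [|i [k Pk ik]]; first by exists k0.
  apply: NNPP => no_above; apply: no_max; exists k => // j Pj.
  rewrite leqNgt; apply/negP => kj; apply: no_above; exists j => //.
  exact: leq_ltn_trans ik kj.
have [k /Pb kb bk] := unbounded b.+1.
by move: (leq_trans bk kb); rewrite ltnn.
Qed.

Lemma sum_nat_of_bool (I : finType) (D : {pred I}) (b : pred I) :
  \sum_(i in D) (b i : nat) = #|[set i in D | b i]|.
Proof.
rewrite -sum1_card big_mkcond [RHS]big_mkcond /=.
by apply: eq_bigr => i _; rewrite inE; case: (i \in D); case: (b i).
Qed.

Lemma matching_sum_card_setI (T : finType) (P : {set {set T}}) (A : {set T}) :
  matching P -> \sum_(f in P) #|f :&: A| <= #|A|.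
Proof.
move=> mP.
have -> : \sum_(f in P) #|f :&: A| = \sum_(f in P) \sum_(x in A) (x \in f : nat).
  apply: eq_bigr => f _; rewrite sum_nat_of_bool; apply: eq_card => x.
  by rewrite !inE andbC.
rewrite exchange_big /= -sum1_card; apply: leq_sum => x _.
rewrite sum_nat_of_bool; apply/card_le1_eqP => f g.
rewrite !inE => /andP[fP xf] /andP[gP xg]; apply: contraTeq isT; rewrite eq_sym => nfg.
by have /disjointFr := mP f g fP gP nfg; move=> /(_ x xf); rewrite xg.
Qed.

Definition rainbow_via (V : finType) (n : nat) (F : 'I_n -> {set {set V}})
    (phi : {set V} -> 'I_n) (M : {set {set V}}) : Prop :=
  [/\ matching M, {in M &, injective phi} & forall e, e \in M -> e \in F (phi e)].

Section RainbowVia.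
Variables (V : finType) (n : nat) (F : 'I_n -> {set {set V}}).

Lemma rainbow_via_rainbow phi M : rainbow_via F phi M -> rainbow_matching F M.
Proof.
move=> [mM injM colM]; split=> //; split; last by exists phi.
by apply/subsetP=> e eM; apply/bigcupP; exists (phi e); rewrite ?colM.
Qed.

Lemma rainbow_viaD1 phi M e : rainbow_via F phi M -> rainbow_via F phi (M :\ e).
Proof.
move=> [mM injM colM]; split.
- by move=> a b /setD1P[_ aM] /setD1P[_ bM]; apply: mM.
- by move=> a b /setD1P[_ aM] /setD1P[_ bM]; apply: injM.
- by move=> a /setD1P[_ aM]; apply: colM.
Qed.

Lemma rainbow_viaU1 phi M (j : 'I_n) (f : {set V}) :
    rainbow_via F phi M -> (forall e, e \in M -> phi e != j) -> f \in F j ->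
    (forall e, e \in M -> [disjoint f & e]) -> f \notin M ->
  rainbow_via F (fun e => if e == f then j else phi e) (f |: M).
Proof.
move=> [mM injM colM] freshj fFj disjf fM.
have neqf e : e \in M -> (e == f) = false.
  by move=> eM; apply: contraTF eM => /eqP->.
split.
- move=> a b /setU1P[->|aM] /setU1P[->|bM]; rewrite ?eqxx //.
  + by move=> _; apply: disjf.
  + by move=> _; rewrite disjoint_sym; apply: disjf.
  + exact: mM.
- move=> a b /setU1P[->|aM] /setU1P[->|bM]; rewrite ?eqxx //.
  + by rewrite neqf // => jb; move: (freshj b bM); rewrite -jb eqxx.
  + by rewrite neqf // => aj; move: (freshj a aM); rewrite aj eqxx.
  + by rewrite !neqf //; apply: injM.
- by move=> a /setU1P[->|aM]; rewrite ?eqxx // neqf ?colM.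
Qed.

Lemma exists_maximum_rainbow_via : 0 < n ->
  exists M phi, rainbow_via F phi M /\
    forall M' phi', rainbow_via F phi' M' -> #|M'| <= #|M|.
Proof.
move=> n_gt0.
pose P k := exists M phi, rainbow_via F phi M /\ #|M| = k.
have P0 : P 0.
  exists set0, (fun=> Ordinal n_gt0); rewrite cards0; split=> //.
  by split=> [a b|a b|a]; rewrite inE.
have Pbounded k : P k -> k <= #|{set V}| by move=> [M [_ [_ <-]]]; apply: max_card.
have [_ [M [phi [rbM <-]]] maxM] := ex_maxn_prop (ex_intro _ 0 P0) Pbounded.
exists M, phi; split=> // M' phi' rbM'; apply: maxM; by exists M', phi'.
Qed.

End RainbowVia.

Section Bollobas.
Local Open Scope ring_scope.

Definition inv_binom (a b : nat) : rat := ('C(a + b, a)%:R)^-1.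

Lemma inv_binom_le1 a b : inv_binom a b <= 1.
Proof. by rewrite invf_le1 ?ltr0n ?ler1n bin_gt0 leq_addr. Qed.

Lemma inv_binom_succ a b : b.+1%:R * inv_binom a b = (a + b.+1)%:R * inv_binom a b.+1.
Proof.
have eq_bin : ((a + b.+1) * 'C(a + b, a) = b.+1 * 'C(a + b.+1, a))%N.
  by have := mul_bin_down (a + b.+1) a; rewrite addKn => <-; rewrite addnS.
have binP k : ('C(a + k, a)%:R : rat) != 0 by rewrite pnatr_eq0 -lt0n bin_gt0 leq_addr.
by apply/eqP; rewrite eqr_div ?binP // -!natrM eq_bin mulnC.
Qed.

Lemma sum_inv_binom_setD1 (T : finType) (X A B : {set T}) :
    A \subset X -> B \subset X -> [disjoint A & B] -> B != set0 ->
  \sum_(x in X | x \notin A) inv_binom #|A| #|B :\ x| = #|X|%:R * inv_binom #|A| #|B|.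
Proof.
move=> AX BX AB; rewrite -card_gt0; case def_b: #|B| => [//|b] _.
rewrite (bigID (mem B)) /=.
rewrite (eq_bigr (fun=> inv_binom #|A| b)); last first.
  by move=> x /andP[_ xB]; move: def_b; rewrite (cardsD1 x B) xB add1n => -[->].
rewrite [X in _ + X](eq_bigr (fun=> inv_binom #|A| b.+1)); last first.
  by move=> x /andP[_ xB]; move: def_b; rewrite (cardsD1 x B) (negbTE xB) add0n => ->.
rewrite (eq_bigl (mem B)); last first.
  move=> x /=; apply/idP/idP => [/andP[]//|xB].
  by rewrite xB (subsetP BX) //= (disjointFl AB).
rewrite [X in _ + X](eq_bigl (mem (X :\: (A :|: B)))); last first.
  by move=> x; rewrite !inE negb_or; case: (x \in X); case: (x \in A); case: (x \in B).
have cardX : (#|X :\: (A :|: B)| + (#|A| + b.+1) = #|X|)%N.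
  rewrite -def_b -(cardsID (A :|: B) X) addnC.
  have /setIidPr-> : A :|: B \subset X by rewrite subUset AX.
  by rewrite cardsU (disjoint_setI0 AB) cards0 subn0.
rewrite !sumr_const def_b -(mulr_natl (inv_binom _ b)) inv_binom_succ.
by rewrite -(mulr_natl (inv_binom _ b.+1)) -mulrDl -natrD addnC cardX.
Qed.

Lemma bollobas_set0 (T I : finType) (S : {set I}) (A B : I -> {set T}) i0 :
    i0 \in S -> B i0 = set0 ->
    (forall i j, i \in S -> j \in S -> i != j -> A i :&: B j != set0) ->
  \sum_(i in S) inv_binom #|A i| #|B i| <= 1.
Proof.
move=> Si0 Bi0 cross; suff -> : S = [set i0] by rewrite big_set1 inv_binom_le1.
apply/setP=> j; rewrite inE; apply/idP/eqP => [Sj|->//].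
apply: contraTeq isT => ji0.
by have := cross j i0 Sj Si0 ji0; rewrite Bi0 setI0 eqxx.
Qed.

Lemma bollobas_in (T I : finType) (X : {set T}) (S : {set I}) (A B : I -> {set T}) :
    (forall i, i \in S -> A i \subset X) -> (forall i, i \in S -> B i \subset X) ->
    (forall i, i \in S -> [disjoint A i & B i]) ->
    (forall i j, i \in S -> j \in S -> i != j -> A i :&: B j != set0) ->
  \sum_(i in S) inv_binom #|A i| #|B i| <= 1.
Proof.
move cX : #|X| => N; elim: N X S B cX => [|N IH] X S B cX AX BX AB cross.
  have [->|[i0 Si0]] := set_0Vmem S; first by rewrite big_set0.
  apply: (bollobas_set0 Si0 _ cross); apply/eqP; rewrite -subset0.
  by move/eqP: cX; rewrite cards_eq0 => /eqP <-; apply: BX.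
have [/existsP[i0 /andP[Si0 /eqP Bi0]]|] := boolP [exists i in S, B i == set0].
  exact: (bollobas_set0 Si0 Bi0 cross).
rewrite negb_exists => /forallP B_neq0.
(* Delete a vertex x, apply induction to the pairs with x \notin A i, and sum over x. *)
have sum_x x : x \in X -> \sum_(i in S | x \notin A i) inv_binom #|A i| #|B i :\ x| <= 1.
  move=> Xx; have := IH (X :\ x) [set i in S | x \notin A i] (fun i => B i :\ x).
  rewrite (eq_bigl (fun i => (i \in S) && (x \notin A i))) => [|i]; last by rewrite inE.
  apply=> [|i|i|i|i j].
  - by move: cX; rewrite (cardsD1 x) Xx => -[].
  - by rewrite inE => /andP[Si xA]; rewrite subsetD1 AX.
  - by rewrite inE => /andP[Si _]; apply: setSD; apply: BX.
  - by rewrite inE => /andP[Si _]; apply: disjointWr (AB i Si); apply: subD1set.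
  rewrite !inE => /andP[Si xAi] /andP[Sj _] ij.
  case/set0Pn: (cross i j Si Sj ij) => y /setIP[yA yB].
  apply/set0Pn; exists y; rewrite !inE yA yB andbT.
  by apply: contraNneq xAi => <-.
have : \sum_(x in X) \sum_(i in S | x \notin A i) inv_binom #|A i| #|B i :\ x| <= N.+1%:R.
  by rewrite -cX -sumr_const; apply: ler_sum => x /sum_x.
under eq_bigr => x _ do rewrite big_mkcondr; rewrite exchange_big /=.
rewrite (eq_bigr (fun i => N.+1%:R * inv_binom #|A i| #|B i|)) => [|i Si].
  by rewrite -mulr_sumr -[X in _ <= X]mulr1 ler_pM2l ?ltr0Sn.
rewrite -big_mkcondr -cX sum_inv_binom_setD1 ?AX ?BX ?AB //.
by have := B_neq0 i; rewrite Si.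
Qed.

Lemma bollobas_uniform (T I : finType) (S : {set I}) (A B : I -> {set T}) (k : nat) :
    (forall i, i \in S -> #|A i| = k /\ #|B i| = k) ->
    (forall i, i \in S -> [disjoint A i & B i]) ->
    (forall i j, i \in S -> j \in S -> i != j -> A i :&: B j != set0) ->
  (#|S| <= 'C(2 * k, k))%N.
Proof.
move=> cardAB AB cross.
have := bollobas_in (X := setT)
  (fun i _ => subsetT (A i)) (fun i _ => subsetT (B i)) AB cross.
rewrite (eq_bigr (fun=> inv_binom k k)) => [|i /cardAB[-> ->] //].
rewrite sumr_const -mulr_natl ler_pdivrMr ?ltr0n ?bin_gt0 ?leq_addr //.
by rewrite mul1r ler_nat addnn -mul2n.
Qed.

End Bollobas.

Lemma double_count_bound (u s n r C T B : nat) : 0 < r -> u + s = n ->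
  u * (2 * n) <= u * (r * s) + B -> B <= s * u + (r - 1) * T ->
  2 * T <= s * C -> 2 * n <= (r + 1) * s + C.
Proof.
case: r => // r _ us h1 h2 h3; rewrite subSS subn0 in h2.
have sum_bound : 2 * u * (2 * n) <= 2 * u * (r.+2 * s) + r * (s * C).
  by have := leq_mul2l r (2 * T) (s * C); rewrite h3 orbT; nia.
rewrite leqNgt; apply/negP => too_big.
have u_bound : 2 * u * (C + 1) <= r * s * C by nia.
have : (r * s + C + 1) * (C + 1) <= 2 * u * (C + 1) by rewrite leq_mul2r; lia.
nia.
Qed.

Section MaximumRainbowMatching.
Variables (V : finType) (n r : nat) (F : 'I_n -> {set {set V}}).
Hypotheses (r_gt0 : 0 < r) (F_uniform : forall i, uniform r (F i))
  (F_matching : forall i, matching (F i)).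
Variables (M : {set {set V}}) (phi : {set V} -> 'I_n).
Hypotheses (rbM : rainbow_via F phi M)
  (M_max : forall M' phi', rainbow_via F phi' M' -> #|M'| <= #|M|).

Definition unused := ~: (phi @: M).

Definition private_edges (j : 'I_n) (e : {set V}) :=
  [set f in F j | (f :&: cover M \subset e) && (f :&: e != set0)].

Definition rich (e : {set V}) := [set j in unused | 1 < #|private_edges j e|].

Lemma edge_neq0 j f : f \in F j -> f != set0.
Proof. by move=> fF; rewrite -card_gt0 (F_uniform fF). Qed.

Lemma card_unused : #|unused| + #|M| = n.
Proof.
have [_ injM _] := rbM.
by rewrite -(card_in_imset injM) addnC cardsC card_ord.
Qed.

Lemma unused_fresh j e : j \in unused -> e \in M -> phi e != j.
Proof. by rewrite inE => jU eM; apply: contraNneq jU => <-; apply: imset_f. Qed.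

Lemma card_cover : #|cover M| <= r * #|M|.
Proof.
have [_ _ colM] := rbM.
apply: leq_trans (leq_of_leqif (leq_card_cover M)) _.
by rewrite mulnC -sum_nat_const; apply: leq_sum => e /colM /F_uniform->.
Qed.

Lemma unused_edge_meets_cover j f : j \in unused -> f \in F j -> f :&: cover M != set0.
Proof.
move=> jU fF; apply/negP => /eqP f_cover0.
have disj_f e : e \in M -> [disjoint f & e].
  move=> eM; rewrite -setI_eq0 -subset0 -f_cover0; apply: setIS.
  exact: bigcup_sup.
have fM : f \notin M.
  apply: contraNN (edge_neq0 fF) => fM.
  by have := disj_f f fM; rewrite -setI_eq0 setIid.
have := M_max (rainbow_viaU1 rbM (fun e => unused_fresh jU) fF disj_f fM).
by rewrite cardsU1 fM ltnn.
Qed.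

Lemma private_disjoint e e' f : e \in M -> e' \in M -> e' != e ->
  f :&: cover M \subset e -> [disjoint f & e'].
Proof.
have [matchM _ _] := rbM.
move=> eM e'M e'e f_sub; rewrite -setI_eq0 -subset0.
have /disjoint_setI0 <- : [disjoint e & e'] by apply: matchM; rewrite // eq_sym.
apply/subsetP => x /setIP[xf xe']; rewrite inE xe' andbT.
by apply: (subsetP f_sub); rewrite inE xf; apply/bigcupP; exists e'.
Qed.

Lemma private_cross j k e f g : j \in unused -> k \in unused -> j != k -> e \in M ->
  f \in private_edges j e -> g \in private_edges k e -> f :&: g != set0.
Proof.
move=> jU kU jk eM /setIdP[fF /andP[f_sub _]] /setIdP[gF /andP[g_sub _]].
apply/negP => /eqP fg0.
pose M1 := M :\ e.
have disj_M1 h : h :&: cover M \subset e -> forall e', e' \in M1 -> [disjoint h & e'].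
  by move=> h_sub e' /setD1P[e'e e'M]; apply: private_disjoint h_sub.
have notin_M1 h i :
    h \in F i -> (forall e', e' \in M1 -> [disjoint h & e']) -> h \notin M1.
  move=> hF disj_h; apply: contraNN (edge_neq0 hF) => hM1.
  by have := disj_h h hM1; rewrite -setI_eq0 setIid.
have fresh_M1 i : i \in unused -> forall e', e' \in M1 -> phi e' != i.
  by move=> iU e' /setD1P[_ e'M]; apply: unused_fresh.
have gM1 := notin_M1 g k gF (disj_M1 g g_sub).
have rbM2 := rainbow_viaU1 (rainbow_viaD1 e rbM) (fresh_M1 k kU) gF (disj_M1 g g_sub) gM1.
have disj_f e' : e' \in g |: M1 -> [disjoint f & e'].
  by case/setU1P=> [->|]; [rewrite -setI_eq0 fg0 | apply: disj_M1].
have fresh_M2 e' : e' \in g |: M1 -> (if e' == g then k else phi e') != j.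
  case: (e' =P g) => [_ _|_ /setU1P[//|e'M1]]; first by rewrite eq_sym.
  exact: fresh_M1.
have fM2 : f \notin g |: M1.
  apply: contraNN (edge_neq0 fF) => fM2.
  by have := disj_f f fM2; rewrite -setI_eq0 setIid.
have := M_max (rainbow_viaU1 rbM2 fresh_M2 fF disj_f fM2).
by rewrite !cardsU1 fM2 gM1 (cardsD1 e M) eM; lia.
Qed.

Lemma two_le_cover_private j f : j \in unused -> f \in F j ->
  2 <= #|f :&: cover M| + \sum_(e in M) (f \in private_edges j e).
Proof.
move=> jU fF.
have /set0Pn[x /setIP[xf /bigcupP[e eM xe]]] := unused_edge_meets_cover jU fF.
have x_cover : x \in f :&: cover M by rewrite inE xf; apply/bigcupP; exists e.
have [f_sub|/subsetPn[y /setIP[yf y_cover] ye]] := boolP (f :&: cover M \subset e).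
  rewrite (bigD1 e) //= inE fF f_sub /=.
  have -> : f :&: e != set0 by apply/set0Pn; exists x; rewrite inE xf.
  rewrite add1n addnS ltnS (leq_trans _ (leq_addr _ _)) // card_gt0.
  by apply/set0Pn; exists x.
apply: leq_trans (leq_addr _ _); have xy : x != y by apply: contraNneq ye => <-.
have <- : #|[set x; y]| = 2 by rewrite cards2 xy.
by rewrite subset_leq_card // subUset !sub1set x_cover inE yf.
Qed.

Lemma unused_count j : #|F j| = n -> j \in unused ->
  2 * n <= r * #|M| + \sum_(e in M) #|private_edges j e|.
Proof.
move=> card_Fj jU.
have : \sum_(f in F j) 2 <=
    \sum_(f in F j) (#|f :&: cover M| + \sum_(e in M) (f \in private_edges j e)).
  by apply: leq_sum => f; apply: two_le_cover_private.
rewrite sum_nat_const card_Fj mulnC big_split /= => /leq_trans; apply.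
apply: leq_add; first by apply: leq_trans card_cover; apply: matching_sum_card_setI.
rewrite exchange_big /=; apply: leq_sum => e _.
by rewrite sum_nat_of_bool subset_leq_card //; apply/subsetP => f /setIdP[].
Qed.

Lemma card_private j e : e \in M -> #|private_edges j e| <= r.
Proof.
have [_ _ colM] := rbM; move=> eM.
have match_P : matching (private_edges j e).
  by move=> f g /setIdP[fF _] /setIdP[gF _]; apply: (F_matching fF gF).
rewrite -(F_uniform (colM e eM)) -sum1_card.
apply: leq_trans _ (matching_sum_card_setI e match_P); apply: leq_sum => f.
by case/setIdP=> _ /andP[_]; rewrite card_gt0.
Qed.

Lemma sum_card_private e : e \in M ->
  \sum_(j in unused) #|private_edges j e| <= #|unused| + (r - 1) * #|rich e|.
Proof.
move=> eM; rewrite -sum1_card -sum_nat_of_bool big_distrr -big_split /=.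
apply: leq_sum => j jU; have := card_private j eM.
by case: ltnP => /= [P_gt1 P_le_r|P_le1 _]; lia.
Qed.

Lemma card_rich e : e \in M -> 2 * #|rich e| <= 'C(2 * r, r).
Proof.
move=> eM; pose S := setX (rich e) [set: bool].
(* A (j, c) and B (j, c) are the first two private edges of colour j, swapped
   according to c. *)
pose A (p : 'I_n * bool) := nth set0 (enum (private_edges p.1 e)) p.2.
pose B (p : 'I_n * bool) := nth set0 (enum (private_edges p.1 e)) (~~ p.2).
have AB_private p : p \in S ->
    [/\ A p \in private_edges p.1 e, B p \in private_edges p.1 e & A p != B p].
  case: p => j c /setXP[/setIdP[_ P_gt1] _].
  have nth_P (i : bool) : nth set0 (enum (private_edges j e)) i \in private_edges j e.
    by rewrite -mem_enum mem_nth // -cardE; case: i; rewrite // ltnW.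
  by rewrite /A /B !nth_P nth_uniq ?enum_uniq -?cardE //; case: c; rewrite // ltnW.
have private_F j f : f \in private_edges j e -> f \in F j by case/setIdP.
have -> : 2 * #|rich e| = #|S| by rewrite cardsX cardsT card_bool mulnC.
apply: (bollobas_uniform (A := A) (B := B)) => [p /AB_private[Ap Bp _]|p|p q].
- by rewrite (F_uniform (private_F _ _ Ap)) (F_uniform (private_F _ _ Bp)).
- by case/AB_private=> /private_F Ap /private_F Bp; apply: F_matching Ap Bp.
move=> pS qS pq; have [Ap _ _] := AB_private p pS; have [_ Bq _] := AB_private q qS.
have [same_colour|] := eqVneq p.1 q.1.
  have -> : B q = A p.
    case: p q pq {pS qS Ap Bq} same_colour => [j c] [k d] /= pq jk; subst k.
    by case: c d pq => [] []; rewrite ?eqxx.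
  by rewrite setIid (edge_neq0 (private_F _ _ Ap)).
have S_unused s : s \in S -> s.1 \in unused by case: s => j c /setXP[/setIdP[]].
move=> ne_colour.
exact: (private_cross (S_unused _ pS) (S_unused _ qS) ne_colour eM Ap Bq).
Qed.

Lemma maximum_rainbow_bound : (forall i, #|F i| = n) ->
  2 * n <= (r + 1) * #|M| + 'C(2 * r, r).
Proof.
move=> F_card.
apply: (double_count_bound (B := \sum_(j in unused) \sum_(e in M) #|private_edges j e|)
  (T := \sum_(e in M) #|rich e|) r_gt0 card_unused).
- have : \sum_(j in unused) 2 * n <=
      \sum_(j in unused) (r * #|M| + \sum_(e in M) #|private_edges j e|).
    by apply: leq_sum => j; apply: unused_count (F_card j).
  by rewrite sum_nat_const big_split /= sum_nat_const.
- have : \sum_(e in M) \sum_(j in unused) #|private_edges j e| <=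
      \sum_(e in M) (#|unused| + (r - 1) * #|rich e|).
    by apply: leq_sum => e; apply: sum_card_private.
  by rewrite exchange_big big_split /= sum_nat_const -big_distrr.
- by rewrite big_distrr -sum_nat_const; apply: leq_sum => e; apply: card_rich.
Qed.

End MaximumRainbowMatching.

Theorem theorem1p6 (r n : nat) (hr : 3 <= r) (hn : 0 < n)
    (V : finType) (F : 'I_n -> {set {set V}})
    (hunif : forall i, uniform r (F i))
    (hmatch : forall i, matching (F i))
    (hsize : forall i, #|F i| = n) :
  exists M : {set {set V}}, rainbow_matching F M /\
    ((2 * n)%:R / (r + 1)%:R - ('C(2 * r, r))%:R / (r + 1)%:R
       <= (#|M|%:R : rat))%R.
Proof.
have r_gt0 : 0 < r by apply: leq_trans hr.
have [M [phi [rbM M_max]]] := exists_maximum_rainbow_via F hn.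
exists M; split; first exact: rainbow_via_rainbow rbM.
have := maximum_rainbow_bound r_gt0 hunif hmatch rbM M_max hsize.
rewrite -mulrBl ler_pdivrMr ?ltr0n ?addn1 // lerBlDr -natrM -natrD ler_nat.
by rewrite [#|M| * _]mulnC.
Qed.
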